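(* Let $\mathcal{F}$ be a finite family of pairwise intersecting compact convex sets in the plane with the $(4,3)$ property, i.e., among any four distinct members some three have a common point. For $D\in\mathcal{F}$, let $G_D$ be the directed graph on vertex set $\mathcal{F}\setminus\{D\}$ with an arc from $A$ to $B$ if and only if $o(ABD)=1$. Then $G_D$ contains no directed cycle of length 4.
   Context: For three pairwise intersecting compact convex sets $X,Y,Z$ in the plane: $o(XYZ)=0$ if $X\cap Y\cap Z\neq\emptyset$; otherwise $o(XYZ)=o(xyz)$ for any $x\in Y\cap Z$, $y\in X\cap Z$, $z\in X\cap Y$, where for points $o(xyz)=+1$ for a counterclockwise and $-1$ for a clockwise triangle (independent of the choice). *)

From HB Require Import structures.
From mathcomp Require Import all_boot all_order all_algebra.
From mathcomp Require Import all_classical all_reals topology normedtype.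
From mathcomp Require Import Rstruct Rstruct_topology.
From Stdlib Require Import Reals.
Set Implicit Arguments. Unset Strict Implicit. Unset Printing Implicit Defensive.
Import Order.TTheory GRing.Theory Num.Theory.
Local Open Scope classical_set_scope.
Local Open Scope ring_scope.

Definition pt := (Rdefinitions.R * Rdefinitions.R)%type.

Definition convex_set (A : set pt) : Prop :=
  forall x y : pt, A x -> A y -> forall t : Rdefinitions.R, 0 <= t -> t <= 1 ->
    A (t * x.1 + (1 - t) * y.1, t * x.2 + (1 - t) * y.2).

(* Signed area (twice) of the triangle xyz; > 0 iff counterclockwise. *)
Definition orient_det (x y z : pt) : Rdefinitions.R :=
  (y.1 - x.1) * (z.2 - x.2) - (y.2 - x.2) * (z.1 - x.1).

Definition ccw (x y z : pt) : Prop := 0 < orient_det x y z.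

(* o(XYZ) = +1 : X,Y,Z have no common point and for points
   x in Y∩Z, y in X∩Z, z in X∩Y the triangle xyz is counterclockwise
   (the paper notes this is independent of the choice of x,y,z). *)
Definition o_pos (X Y Z : set pt) : Prop :=
  X `&` Y `&` Z = set0 /\
  exists x y z : pt, (Y `&` Z) x /\ (X `&` Z) y /\ (X `&` Y) z /\ ccw x y z.

From mathcomp Require Import all_boot all_order all_algebra.
From mathcomp Require Import all_classical all_reals topology normedtype.
From mathcomp Require Import Rstruct Rstruct_topology.
From mathcomp Require Import ring lra.
Import Order.TTheory GRing.Theory Num.Theory.
Local Open Scope classical_set_scope.
Local Open Scope ring_scope.

(* Collinear witnesses of three convex sets force a common point (one of them
   lies between the other two).  Hence, when X, Y, Z have no common point, the
   sign of [orient_det] cannot change while a witness moves along a segment, and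
   o(XYZ) does not depend on the witnesses.  This makes o transitive: if
   o(ABD) = o(BCD) = +1 and q is common to A, B, C, then q is not in D, and for
   witnesses x in C, b in B, y in A, all in D, the triangles q x b and q b y are
   counterclockwise, so q x y is too (otherwise q lies in the triangle x b y,
   inside D).  So o(ACD) = +1 unless A, C, D meet; and if A, C, D meet then
   A, B, C do not.  For a 4-cycle A -> B -> C -> E -> A of G_D, (4,3) on
   {A, B, C, D} and on {C, E, A, D} with transitivity forces A, C, D to meet,
   since otherwise o(ACD) = o(CAD) = +1; likewise B, E, D meet.  Then no three
   of A, B, C, E meet, contradicting (4,3). *)

Local Notation R := Rdefinitions.R.

Definition convex_comb (t : R) (x y : pt) : pt :=
  (t * x.1 + (1 - t) * y.1, t * x.2 + (1 - t) * y.2).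

Lemma convex_set_comb (A : set pt) (x y : pt) (t : R) :
  convex_set A -> A x -> A y -> 0 <= t <= 1 -> A (convex_comb t x y).
Proof. by move=> cA Ax Ay /andP[t0 t1]; exact: cA. Qed.

Lemma orient_detE (x y z : pt) : orient_det x y z =
  (y.1 - x.1) * (z.2 - x.2) - (y.2 - x.2) * (z.1 - x.1).
Proof. by rewrite /orient_det !RminusE !RmultE. Qed.

Lemma orient_det_rot (x y z : pt) : orient_det x y z = orient_det y z x.
Proof. rewrite !orient_detE; ring. Qed.

Lemma orient_detC (x y z : pt) : orient_det y x z = - orient_det x y z.
Proof. rewrite !orient_detE; ring. Qed.

Lemma orient_det_convex_comb (t : R) (x0 x1 y z : pt) :
  orient_det (convex_comb t x1 x0) y z =
  t * orient_det x1 y z + (1 - t) * orient_det x0 y z.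
Proof. rewrite !orient_detE /=; ring. Qed.

Lemma ccw_rot (x y z : pt) : ccw x y z = ccw y z x.
Proof. by rewrite /ccw orient_det_rot. Qed.

Lemma ccw_asym (x y z : pt) : ccw x y z -> ~ ccw y x z.
Proof. by rewrite /ccw orient_detC; lra. Qed.

Lemma collinear_between (x y z : pt) : orient_det x y z = 0 ->
  exists2 t, 0 <= t <= 1 &
    [\/ x = convex_comb t y z, y = convex_comb t z x | z = convex_comb t x y].
Proof.
case: x y z => [x1 x2] [y1 y2] [z1 z2].
rewrite orient_detE /convex_comb /= => det0.
pose n := (z1 - y1) ^+ 2 + (z2 - y2) ^+ 2.
have [n0|nn0] := eqVneq n 0.
  move/eqP: n0; rewrite paddr_eq0 ?sqr_ge0 // !sqrf_eq0 !subr_eq0.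
  case/andP=> /eqP-> /eqP->.
  by exists 0; rewrite ?lexx ?ler01 //; constructor 3; congr pair; ring.
(* [lam] locates the projection of [x] on the line [y z]: [x] lies between [y]
   and [z] iff [0 <= lam <= 1], and otherwise [y] or [z] lies between the others. *)
pose lam := ((x1 - y1) * (z1 - y1) + (x2 - y2) * (z2 - y2)) / n.
have ex1 : x1 = y1 + lam * (z1 - y1).
  have : x1 - (y1 + lam * (z1 - y1)) =
    - (z2 - y2) * ((y1 - x1) * (z2 - x2) - (y2 - x2) * (z1 - x1)) / n.
    by rewrite /lam /n; field.
  by rewrite det0 mulr0 mul0r => /eqP; rewrite subr_eq0 => /eqP.
have ex2 : x2 = y2 + lam * (z2 - y2).
  have : x2 - (y2 + lam * (z2 - y2)) =
    (z1 - y1) * ((y1 - x1) * (z2 - x2) - (y2 - x2) * (z1 - x1)) / n.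
    by rewrite /lam /n; field.
  by rewrite det0 mulr0 mul0r => /eqP; rewrite subr_eq0 => /eqP.
have [lam_lt0|lam_ge0] := ltrP lam 0.
  exists (- lam / (1 - lam)); first by rewrite divr_ge0 ?ler_pdivrMr /=; lra.
  by constructor 2; rewrite ex1 ex2; congr pair; field; lra.
have [lam_le1|lam_gt1] := lerP lam 1.
  exists (1 - lam); first by apply/andP; lra.
  by constructor 1; rewrite ex1 ex2; congr pair; ring.
exists (1 / lam); first by rewrite divr_ge0 ?ler_pdivrMr /=; lra.
by constructor 3; rewrite ex1 ex2; congr pair; field; lra.
Qed.

Definition witnesses (X Y Z : set pt) (x y z : pt) : Prop :=
  [/\ (Y `&` Z) x, (X `&` Z) y & (X `&` Y) z].

Lemma witnesses_rot {X Y Z : set pt} {x y z : pt} :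
  witnesses X Y Z x y z -> witnesses Y Z X y z x.
Proof. by case=> -[Yx Zx] [Xy Zy] [Xz Yz]; split. Qed.

Lemma setI3_rot (T : Type) (X Y Z : set T) : Y `&` Z `&` X = X `&` Y `&` Z.
Proof. by rewrite setIC setIA. Qed.

Section Witnesses.
Context {X Y Z : set pt}.
Hypotheses (cX : convex_set X) (cY : convex_set Y) (cZ : convex_set Z).

Lemma collinear_witnesses_meet {x y z : pt} : witnesses X Y Z x y z ->
  orient_det x y z = 0 -> X `&` Y `&` Z !=set0.
Proof.
case=> -[Yx Zx] [Xy Zy] [Xz Yz] /collinear_between[t t01 [ex|ey|ez]].
- by exists x; do 2?split=> //; rewrite ex; exact: convex_set_comb.
- by exists y; do 2?split=> //; rewrite ey; exact: convex_set_comb.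
- by exists z; do 2?split=> //; rewrite ez; exact: convex_set_comb.
Qed.

Hypothesis XYZ0 : X `&` Y `&` Z = set0.

Lemma ccw_witnesses_move {x0 x1 y z : pt} : (Y `&` Z) x0 ->
  witnesses X Y Z x1 y z -> ccw x0 y z -> ccw x1 y z.
Proof.
move=> [Yx0 Zx0] [[Yx1 Zx1] yXZ zXY]; rewrite /ccw => f0_gt0.
rewrite ltNge; apply/negP => f1_le0.
set f0 := orient_det x0 y z in f0_gt0; set f1 := orient_det x1 y z in f1_le0.
(* [orient_det . y z] is affine along [x0, x1], with its zero at [t]. *)
pose t := f0 / (f0 - f1).
have t01 : 0 <= t <= 1 by rewrite divr_ge0 ?ler_pdivrMr /=; lra.
have wt : witnesses X Y Z (convex_comb t x1 x0) y z.
  by split=> //; split; exact: convex_set_comb.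
have ft0 : orient_det (convex_comb t x1 x0) y z = 0.
  by rewrite orient_det_convex_comb -/f0 -/f1 /t; field; lra.
by have [w] := collinear_witnesses_meet wt ft0; rewrite XYZ0.
Qed.

End Witnesses.

Lemma ccw_witnesses_indep (X Y Z : set pt) (x0 y0 z0 x y z : pt) :
  convex_set X -> convex_set Y -> convex_set Z -> X `&` Y `&` Z = set0 ->
  witnesses X Y Z x0 y0 z0 -> witnesses X Y Z x y z ->
  ccw x0 y0 z0 -> ccw x y z.
Proof.
move=> cX cY cZ XYZ0 [x0YZ y0XZ z0XY] w h0; have [xYZ yXZ zXY] := w.
have YZX0 : Y `&` Z `&` X = set0 by rewrite setI3_rot.
have ZXY0 : Z `&` X `&` Y = set0 by rewrite 2!setI3_rot.
have y0ZX : (Z `&` X) y0 by rewrite setIC.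
have h1 : ccw x y0 z0 :=
  ccw_witnesses_move cX cY cZ XYZ0 x0YZ (And3 xYZ y0XZ z0XY) h0.
rewrite ccw_rot in h1.
have h2 : ccw y z0 x :=
  ccw_witnesses_move cY cZ cX YZX0 y0ZX (witnesses_rot (And3 xYZ yXZ z0XY)) h1.
rewrite ccw_rot in h2.
have h3 : ccw z x y :=
  ccw_witnesses_move cZ cX cY ZXY0 z0XY (witnesses_rot (witnesses_rot w)) h2.
by rewrite 2!ccw_rot.
Qed.

Section OrientationOfTriples.
Context {X Y Z : set pt}.
Hypotheses (cX : convex_set X) (cY : convex_set Y) (cZ : convex_set Z).

Lemma o_pos_ccw {x y z : pt} :
  o_pos X Y Z -> witnesses X Y Z x y z -> ccw x y z.
Proof.
case=> XYZ0 [x0 [y0 [z0 [x0YZ [y0XZ [z0XY h0]]]]]] w.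
exact: ccw_witnesses_indep cX cY cZ XYZ0 (And3 x0YZ y0XZ z0XY) w h0.
Qed.

Lemma o_pos_asym : o_pos X Y Z -> ~ o_pos Y X Z.
Proof.
move=> oXYZ [_ [x [y [z [xXZ [yYZ [[Yz Xz] h]]]]]]].
exact: ccw_asym h (o_pos_ccw oXYZ (And3 yYZ xXZ (conj Xz Yz))).
Qed.

End OrientationOfTriples.

(* Otherwise [q] is the convex combination of [x], [b], [y] with the weights
   [orient_det q b y], [- orient_det q x y], [orient_det q x b]. *)
Lemma ccw_fan_convex {K : set pt} {q x b y : pt} :
  convex_set K -> K x -> K b -> K y -> ~ K q ->
  ccw q x b -> ccw q b y -> ccw q x y.
Proof.
move=> cK Kx Kb Ky Kq; rewrite /ccw => hxb hby.
rewrite ltNge; apply/negP => hxy; apply: Kq.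
move: hxb hby hxy; rewrite !orient_detE.
case: q x b y Kx Kb Ky => [q1 q2] [x1 x2] [b1 b2] [y1 y2] Kx Kb Ky /=.
set al := (b1 - q1) * (y2 - q2) - (b2 - q2) * (y1 - q1).
set be := (x1 - q1) * (y2 - q2) - (x2 - q2) * (y1 - q1).
set ga := (x1 - q1) * (b2 - q2) - (x2 - q2) * (b1 - q1).
move=> ga_gt0 al_gt0 be_le0.
pose u := convex_comb (al / (al - be)) (x1, x2) (b1, b2).
have Ku : K u by apply: convex_set_comb; rewrite // divr_ge0 ?ler_pdivrMr /=; lra.
have -> : (q1, q2) = convex_comb ((al - be) / (al - be + ga)) u (y1, y2).
  rewrite /u /convex_comb /=; congr pair; rewrite /al /be /ga; field;
  by rewrite -/al -/be -/ga; apply/andP; split; rewrite gt_eqF //; lra.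
by apply: convex_set_comb; rewrite // divr_ge0 ?ler_pdivrMr /=; lra.
Qed.

Section OrientedPaths.
Context {A B C D : set pt}.
Hypotheses (cA : convex_set A) (cB : convex_set B) (cC : convex_set C)
  (cD : convex_set D).
Hypotheses (oABD : o_pos A B D) (oBCD : o_pos B C D) (BD : B `&` D !=set0).

Lemma o_pos_trans : A `&` D !=set0 -> C `&` D !=set0 ->
  A `&` B `&` C !=set0 -> A `&` C `&` D = set0 -> o_pos A C D.
Proof.
move=> [y yAD] [x xCD] [q [[Aq Bq] Cq]] ACD0; split=> //.
exists x, y, q; do 3!split=> //.
have [b bBD] := BD.
have nDq : ~ D q.
  by case: oABD => ABD0 _ Dq; have : (A `&` B `&` D) q by []; rewrite ABD0.
have hby : ccw b y q := o_pos_ccw cA cB cD oABD (And3 bBD yAD (conj Aq Bq)).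
have hxb : ccw x b q := o_pos_ccw cB cC cD oBCD (And3 xCD bBD (conj Bq Cq)).
case: xCD bBD yAD => [_ Dx] [_ Db] [_ Dy].
rewrite 2!ccw_rot in hby; rewrite 2!ccw_rot in hxb.
by rewrite 2!ccw_rot; exact: ccw_fan_convex cD Dx Db Dy nDq hxb hby.
Qed.

Lemma o_pos_path_disjoint : A `&` C `&` D !=set0 -> A `&` B `&` C = set0.
Proof.
move=> [p [[Ap Cp] Dp]]; rewrite -subset0 => q [[Aq Bq] Cq].
have [m [Bm Dm]] := BD.
have hmp : ccw m p q :=
  o_pos_ccw cA cB cD oABD (And3 (conj Bm Dm) (conj Ap Dp) (conj Aq Bq)).
have hpm : ccw p m q :=
  o_pos_ccw cB cC cD oBCD (And3 (conj Cp Dp) (conj Bm Dm) (conj Bq Cq)).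
exact: ccw_asym hmp hpm.
Qed.

End OrientedPaths.

Definition three_of_four_meet {T : Type} (A B C E : set T) : Prop :=
  A `&` B `&` C !=set0 \/ A `&` B `&` E !=set0 \/
  A `&` C `&` E !=set0 \/ B `&` C `&` E !=set0.

Lemma three_of_four_meet_first {T : Type} (A B C E : set T) :
  three_of_four_meet A B C E -> A `&` B `&` E = set0 ->
  A `&` C `&` E = set0 -> B `&` C `&` E = set0 -> A `&` B `&` C !=set0.
Proof.
move=> h ABE0 ACE0 BCE0.
by case: h => [|[|[|]]] // [p]; rewrite ?ABE0 ?ACE0 ?BCE0.
Qed.

Section FourCycle.
Context {A B C E D : set pt}.
Hypotheses (cA : convex_set A) (cB : convex_set B) (cC : convex_set C)
  (cE : convex_set E) (cD : convex_set D).
Hypotheses (AD : A `&` D !=set0) (BD : B `&` D !=set0)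
  (CD : C `&` D !=set0) (ED : E `&` D !=set0).
Hypotheses (oABD : o_pos A B D) (oBCD : o_pos B C D)
  (oCED : o_pos C E D) (oEAD : o_pos E A D).

Lemma four_cycle_chord : three_of_four_meet A B C D ->
  three_of_four_meet C E A D -> A `&` C `&` D !=set0.
Proof.
move=> ABCD CEAD; apply/set0P/eqP => ACD0.
have CAD0 : C `&` A `&` D = set0 by rewrite (setIC C).
have ABC : A `&` B `&` C !=set0.
  by apply: three_of_four_meet_first ABCD _ ACD0 _; [case: oABD | case: oBCD].
have CEA : C `&` E `&` A !=set0.
  by apply: three_of_four_meet_first CEAD _ CAD0 _; [case: oCED | case: oEAD].
have oACD := o_pos_trans cA cB cC cD oABD oBCD BD AD CD ABC ACD0.
have oCAD := o_pos_trans cC cE cA cD oCED oEAD ED CD AD CEA CAD0.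
exact: o_pos_asym cA cC cD oACD oCAD.
Qed.

End FourCycle.

Lemma no_four_cycle {A B C E D : set pt} :
  convex_set A -> convex_set B -> convex_set C -> convex_set E ->
  convex_set D ->
  A `&` D !=set0 -> B `&` D !=set0 -> C `&` D !=set0 -> E `&` D !=set0 ->
  o_pos A B D -> o_pos B C D -> o_pos C E D -> o_pos E A D ->
  three_of_four_meet A B C D -> three_of_four_meet C E A D ->
  three_of_four_meet B C E D -> three_of_four_meet E A B D ->
  ~ three_of_four_meet A B C E.
Proof.
move=> cA cB cC cE cD AD BD CD ED oABD oBCD oCED oEAD ABCD CEAD BCED EABD.
have ACD := four_cycle_chord cA cB cC cE cD AD BD CD ED
  oABD oBCD oCED oEAD ABCD CEAD.
have BED := four_cycle_chord cB cC cE cA cD BD CD ED AD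
  oBCD oCED oEAD oABD BCED EABD.
have ABC0 := o_pos_path_disjoint cA cB cC cD oABD oBCD BD ACD.
have BCE0 := o_pos_path_disjoint cB cC cE cD oBCD oCED CD BED.
have CEA0 : C `&` E `&` A = set0.
  by apply: (o_pos_path_disjoint cC cE cA cD oCED oEAD ED); rewrite (setIC C).
have EAB0 : E `&` A `&` B = set0.
  by apply: (o_pos_path_disjoint cE cA cB cD oEAD oABD AD); rewrite (setIC E).
rewrite setI3_rot in CEA0; rewrite 2!setI3_rot in EAB0.
by case=> [|[|[|]]] [p]; rewrite ?ABC0 ?BCE0 ?CEA0 ?EAB0.
Qed.

Lemma three_of_four_meet_of_triple {I : eqType} {T : Type} (S : I -> set T)
    (a b c e : I) :
  (exists i j k : I, uniq [:: i; j; k] /\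
     [/\ i \in [:: a; b; c; e], j \in [:: a; b; c; e] & k \in [:: a; b; c; e]] /\
     S i `&` S j `&` S k !=set0) ->
  three_of_four_meet (S a) (S b) (S c) (S e).
Proof.
move=> [i [j [k [ijk [[hi hj hk] [p [[Sip Sjp] Skp]]]]]]].
move: hi hj hk ijk Sip Sjp Skp; rewrite !inE.
move=> /or4P[]/eqP-> /or4P[]/eqP-> /or4P[]/eqP-> ijk Sip Sjp Skp.
all: try by move: ijk; rewrite /= !inE eqxx ?orbT ?andbF.
all: rewrite /three_of_four_meet; firstorder.
Qed.

Lemma uniq_quadruples {T : eqType} {D a b c e : T} : uniq [:: D; a; b; c; e] ->
  [/\ uniq [:: a; b; c; D], uniq [:: c; e; a; D], uniq [:: b; c; e; D],
      uniq [:: e; a; b; D] & uniq [:: a; b; c; e]].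
Proof.
rewrite /= !inE !negb_or !andbT.
case/and4P=> /and4P[Da Db Dc De] /and3P[ab ac ae] /andP[bc be] ce.
by rewrite ![_ == D]eq_sym (eq_sym c a) (eq_sym e a) (eq_sym e b)
  Da Db Dc De ab ac ae bc be ce.
Qed.

Theorem claim8 (I : finType) (S : I -> set pt)
  (Sinj : injective S)
  (Scompact : forall i, compact (S i))
  (Sconvex : forall i, convex_set (S i))
  (Spair : forall i j, S i `&` S j !=set0)
  (S43 : forall a b c e : I, uniq [:: a; b; c; e] ->
     exists i j k : I, uniq [:: i; j; k] /\
       [/\ i \in [:: a; b; c; e], j \in [:: a; b; c; e] & k \in [:: a; b; c; e]] /\
       S i `&` S j `&` S k !=set0)
  (D : I) :
  ~ (exists a b c e : I, uniq [:: D; a; b; c; e] /\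
       o_pos (S a) (S b) (S D) /\ o_pos (S b) (S c) (S D) /\
       o_pos (S c) (S e) (S D) /\ o_pos (S e) (S a) (S D)).
Proof.
move=> [a [b [c [e [uDabce [oab [obc [oce oea]]]]]]]].
have meet43 w x y z : uniq [:: w; x; y; z] ->
    three_of_four_meet (S w) (S x) (S y) (S z).
  by move/S43/three_of_four_meet_of_triple.
have [uabcD uceaD ubceD ueabD uabce] := uniq_quadruples uDabce.
apply: (no_four_cycle (Sconvex a) (Sconvex b) (Sconvex c) (Sconvex e) (Sconvex D)
  (Spair a D) (Spair b D) (Spair c D) (Spair e D) oab obc oce oea).
all: exact: meet43.
Qed.
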